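(* Let $n>0$ and $i_1,\dots,i_5\in\{0,1\}$, and suppose $\alpha=i_1^{(n)}i_2^{(n)}i_3^{(n)}i_4^{(n)}i_5^{(n)}\in\mathcal{L}^*(E_{\mathbb{Z}})$. Then $\alpha$ can be written in one and only one of the forms $$i_1^{(n+1)}i_3^{(n+1)}i_5^{(n)}\qquad\text{or}\qquad i_1^{(n)}i_2^{(n+1)}i_4^{(n+1)}.$$
   Context: The two-sided Thue--Morse sequence $\omega=(\omega_k)_{k\in\mathbb{Z}}$ over $\{0,1\}$ is defined by $\omega_0=0$, $\omega_{2^n+j}=1-\omega_j$ for $n\ge0$, $0\le j<2^n$, and $\omega_{-i}=\omega_{i-1}$ for $i\ge1$. $\mathcal{L}^*(E_{\mathbb{Z}})$ denotes the set of finite nonempty words occurring in $\omega$. Blocks $i^{(n)}$: $0^{(0)}=0$, $1^{(0)}=1$, and inductively $0^{(n)}=0^{(n-1)}1^{(n-1)}$, $1^{(n)}=1^{(n-1)}0^{(n-1)}$ (concatenation); $|i^{(n)}|=2^n$. *)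

(* Symbols {0,1} are encoded as bool: 0 = false, 1 = true. *)
From mathcomp Require Import all_boot all_order all_algebra.
Set Implicit Arguments. Unset Strict Implicit. Unset Printing Implicit Defensive.

(* One-sided Thue--Morse: w_0 = 0, w_{2^n + j} = 1 - w_j (0 <= j < 2^n).
   For k > 0, 2^n is the largest power of 2 that is <= k, i.e. n = trunc_log 2 k.
   Fuel-based recursion; fuel k.+1 is always sufficient since k strictly decreases. *)
Fixpoint tm_fuel (f k : nat) : bool :=
  match f with
  | 0 => false
  | f'.+1 => if k == 0 then false else ~~ tm_fuel f' (k - 2 ^ trunc_log 2 k)
  end.

Definition tm (k : nat) : bool := tm_fuel k.+1 k.

(* Two-sided: omega_{-i} = omega_{i-1} for i >= 1; Negz k = -(k+1). *)
Definition omega (z : int) : bool :=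
  match z with
  | Posz k => tm k
  | Negz k => tm k
  end.

Definition occurs_at (w : seq bool) (m : int) : Prop :=
  w = [seq omega (m + (j%:Z))%R | j <- iota 0 (size w)].

Definition inL (w : seq bool) : Prop := 0 < size w /\ exists m : int, occurs_at w m.

Fixpoint blk (n : nat) (i : bool) : seq bool :=
  match n with
  | 0 => [:: i]
  | n'.+1 => blk n' i ++ blk n' (~~ i)
  end.

From mathcomp Require Import all_boot all_order all_algebra.
From mathcomp Require Import zify.

(* Let mu be the Thue--Morse morphism 0 |-> 01, 1 |-> 10, so that
   alpha = mu^n(i1 i2 i3 i4 i5) and omega(2q + b) = omega'(q) + b (mod 2) for a
   Thue--Morse sequence omega'.  No mu-image contains a factor aaa, since every
   pair of positions 2q, 2q+1 carries different letters.  Hence an occurrence of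
   mu(w) with |w| >= 2 must start at an even position, and it comes from an
   occurrence of w in omega'; after n such steps, i1 i2 i3 i4 i5 itself occurs in
   a Thue--Morse sequence.  According to the parity of that occurrence, the
   5-letter factor is cut into blocks of mu as (i1 i2)(i3 i4)i5 or i1(i2 i3)(i4 i5),
   and both cuttings at once would produce aaa one level up. *)

Import GRing.Theory.

Lemma trunc_log2_subn_lt k : k != 0 -> k - 2 ^ trunc_log 2 k < k.
Proof. by move=> k_neq0; rewrite ltn_subrL expn_gt0 /= lt0n. Qed.

Lemma tm_fuel_enough f k : k < f -> tm_fuel f k = tm k.
Proof.
elim/ltn_ind: f k => [[|f] IH] k // lt_kf; rewrite /tm /=.
case: eqP => // /eqP /trunc_log2_subn_lt lt_k.
by rewrite !IH //; lia.
Qed.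

Lemma tmE k : tm k = if k == 0 then false else ~~ tm (k - 2 ^ trunc_log 2 k).
Proof.
rewrite {1}/tm /=; case: eqP => // /eqP /trunc_log2_subn_lt lt_k.
by rewrite tm_fuel_enough.
Qed.

Lemma tm_pow2D t j : j < 2 ^ t -> tm (2 ^ t + j) = ~~ tm j.
Proof.
move=> lt_j; rewrite tmE addn_eq0 expn_eq0 /= (@trunc_log_eq _ t) ?addKn //.
by rewrite leq_addr /= expnS mul2n -addnn ltn_add2l.
Qed.

Lemma tm_bit_double (b : bool) k : tm (b + k.*2) = b (+) tm k.
Proof.
elim/ltn_ind: k b => k IH b; have [->|k_gt0] := posnP k.
  by case: b; rewrite // -[1]/(2 ^ 0 + 0) tm_pow2D.
have /andP[le_tk lt_k] := trunc_log_bounds (isT : 1 < 2) k_gt0.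
set t := trunc_log 2 k in le_tk lt_k; set j := k - 2 ^ t.
have def_k : k = 2 ^ t + j by rewrite subnKC.
have lt_j : j < 2 ^ t by move: lt_k; rewrite expnS; lia.
have -> : b + k.*2 = 2 ^ t.+1 + (b + j.*2) by rewrite expnS; lia.
rewrite def_k !tm_pow2D ?IH ?addbN //; last by rewrite expnS; case: b; lia.
by have : 0 < 2 ^ t := expn_gt0 2 t; lia.
Qed.

Local Open Scope ring_scope.

(* The reflection omega_{-i} = omega_{i-1} makes omega = tmz false the mu-image of
   tmz true rather than of itself; the pair of the two is closed under
   desubstitution. *)
Definition tmz (c : bool) (z : int) : bool :=
  match z with Posz k => tm k | Negz k => c (+) tm k end.

Lemma omega_tmz : omega =1 tmz false.
Proof. by case. Qed.

Lemma tmz_bit_double c (q : int) (b : bool) :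
  tmz c (q * 2 + (b : nat)%:Z) = tmz (~~ c) q (+) b.
Proof.
case: q => k.
  have -> : Posz k * 2 + (b : nat)%:Z = Posz (b + k.*2) by case: b; lia.
  by rewrite /= tm_bit_double addbC.
have -> : Negz k * 2 + (b : nat)%:Z = Negz (~~ b + k.*2) by case: b; lia.
by rewrite /= tm_bit_double; case: b; case: c; case: (tm k).
Qed.

Lemma int_half (m : int) : exists q (b : bool), m = q * 2 + (b : nat)%:Z.
Proof.
case: m => k; have := odd_double_half k; case: (odd k) => /= def_k.
- by exists (Posz k./2), true; lia.
- by exists (Posz k./2), false; lia.
- by exists (Negz k./2), false; lia.
- by exists (Negz k./2), true; lia.
Qed.

Definition occurs_in (X : int -> bool) (w : seq bool) (m : int) : Prop :=
  forall j, (j < size w)%N -> nth false w j = X (m + j%:Z).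

Lemma occurs_at_tmz w m : occurs_at w m -> occurs_in (tmz false) w m.
Proof.
move=> def_w j lt_j; rewrite -omega_tmz {1}def_w.
by rewrite (nth_map 0%N) ?size_iota // nth_iota.
Qed.

Definition mu (w : seq bool) : seq bool := flatten [seq [:: b; ~~ b] | b <- w].

Lemma size_mu w : size (mu w) = (size w).*2.
Proof. by elim: w => //= b w IH; rewrite IH doubleS. Qed.

Lemma nth_mu w j (b : bool) :
  (j < size w)%N -> nth false (mu w) (b + j.*2) = nth false w j (+) b.
Proof.
rewrite /mu; elim: w j => [|a w IH] [|j] //= lt_j.
  by clear IH; case: b; rewrite /= ?addbF ?addbT.
by rewrite doubleS !addnS /= IH.
Qed.

Section MuImage.

Context {X Y : int -> bool}.
Hypothesis X_mu_Y : forall q (b : bool), X (q * 2 + (b : nat)%:Z) = Y q (+) b.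

Lemma mu_image_at q k : X (q * 2 + k%:Z) = Y (q + (k./2)%:Z) (+) odd k.
Proof.
rewrite -X_mu_Y; congr X; have := odd_double_half k; case: (odd k) => /=; lia.
Qed.

Lemma mu_image_no_triple p : ~ (X p = X (p + 1) /\ X (p + 1) = X (p + 2)).
Proof.
have [q [b ->]] := int_half p.
rewrite -!addrA -!PoszD !mu_image_at.
by case: b => /= [[_ eq_Y]|[eq_Y _]]; move: eq_Y; case: (Y _).
Qed.

Hypothesis Y_no_triple : forall p, ~ (Y p = Y (p + 1) /\ Y (p + 1) = Y (p + 2)).

Lemma occurs_mu_even w m : (1 < size w)%N -> occurs_in X (mu w) m ->
  exists2 q, m = q * 2 & occurs_in Y w q.
Proof.
move=> w_gt1 occ_m; have [q [b def_m]] := int_half m.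
have occ_w j (b' : bool) : (j < size w)%N ->
    nth false w j (+) b' = Y (q + ((b + (b' + j.*2))./2)%:Z) (+) odd (b + (b' + j.*2)).
  move=> lt_j; rewrite -nth_mu // occ_m ?size_mu; last by case: b'; lia.
  by rewrite def_m -addrA -PoszD mu_image_at.
case: b def_m occ_w => def_m occ_w; last first.
  exists q => [|j lt_j]; first by rewrite def_m addr0.
  have := occ_w j false lt_j.
  by rewrite /= doubleK odd_double !addbF.
have := occ_w 0%N false (ltnW w_gt1); have := occ_w 0%N true (ltnW w_gt1).
have := occ_w 1%N false w_gt1; have := occ_w 1%N true w_gt1.
rewrite /= addr0 !addbT !addbF => Y2 Y1 Y1' Y0.
case: (Y_no_triple q); split; first by rewrite -Y1' Y0 negbK.
by rewrite -Y2 Y1 negbK.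
Qed.

Lemma occurs5_pairing a1 a2 a3 a4 a5 m :
  occurs_in X [:: a1; a2; a3; a4; a5] m ->
  (a1 != a2) && (a3 != a4) (+) (a2 != a3) && (a4 != a5).
Proof.
have [q [b ->]] := int_half m => occ.
move: (occ 0%N isT) (occ 1%N isT) (occ 2%N isT) (occ 3%N isT) (occ 4%N isT).
rewrite -!addrA -!PoszD !mu_image_at; clear occ.
have := Y_no_triple q.
by case: b => /= + -> -> -> -> ->; rewrite addr0;
  case: (Y q); case: (Y (q + 1)); case: (Y (q + 2)) => //=; tauto.
Qed.

End MuImage.

Lemma tmz_no_triple c p : ~ (tmz c p = tmz c (p + 1) /\ tmz c (p + 1) = tmz c (p + 2)).
Proof. exact: mu_image_no_triple (tmz_bit_double c) p. Qed.

Lemma flatten_blkS n w :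
  flatten [seq blk n.+1 b | b <- w] = flatten [seq blk n b | b <- mu w].
Proof. by rewrite /mu; elim: w => //= b w ->; rewrite !catA. Qed.

Lemma occurs_blk_tmz n c w m :
  occurs_in (tmz c) (flatten [seq blk n b | b <- w]) m -> (1 < size w)%N ->
  exists m', occurs_in (tmz (c (+) odd n)) w m'.
Proof.
elim: n c w m => [|n IH] c w m; first by rewrite flatten_seq1 addbF; exists m.
rewrite flatten_blkS => /IH occ_mu w_gt1.
have [|m' occ_m'] := occ_mu; first by rewrite size_mu; lia.
have [q _ occ_q] := occurs_mu_even (tmz_bit_double _) (tmz_no_triple _) _ _ w_gt1 occ_m'.
by exists q; rewrite oddS addbN.
Qed.

Lemma size_blk n b : size (blk n b) = (2 ^ n)%N.
Proof. by elim: n b => //= n IH b; rewrite size_cat !IH expnS mul2n addnn. Qed.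

Lemma nth_blk0 n b : nth false (blk n b) 0 = b.
Proof. by elim: n b => //= n IH b; rewrite nth_cat size_blk expn_gt0 IH. Qed.

Lemma flatten_blk_inj n (s t : seq bool) : size s = size t ->
  flatten [seq blk n b | b <- s] = flatten [seq blk n b | b <- t] -> s = t.
Proof.
elim: s t => [|a s IH] [|b t] //= [eq_size] /eqP.
rewrite eqseq_cat ?size_blk // => /andP[/eqP eq_ab /eqP eq_st].
by rewrite -(nth_blk0 n a) eq_ab nth_blk0 (IH t).
Qed.

Theorem lemma3p4 (n : nat) (i1 i2 i3 i4 i5 : bool) :
  (0 < n)%N ->
  let alpha := blk n i1 ++ blk n i2 ++ blk n i3 ++ blk n i4 ++ blk n i5 in
  inL alpha ->
  let A := alpha = blk n.+1 i1 ++ blk n.+1 i3 ++ blk n i5 in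
  let B := alpha = blk n i1 ++ blk n.+1 i2 ++ blk n.+1 i4 in
  (A \/ B) /\ ~ (A /\ B).
Proof.
have [bitsA bitsB] :
    ([:: i1; i2; i3; i4; i5] = [:: i1; ~~ i1; i3; ~~ i3; i5] <->
       (i1 != i2) && (i3 != i4)) /\
    ([:: i1; i2; i3; i4; i5] = [:: i1; i2; ~~ i2; i4; ~~ i4] <->
       (i2 != i3) && (i4 != i5)).
  by case: i1 i2 i3 i4 i5 => [] [] [] [] []; split; split=> // [[]].
move=> _ alpha [_ [m /occurs_at_tmz occ_alpha]] A B.
pose flat s := flatten [seq blk n b | b <- s].
have def_alpha : alpha = flat [:: i1; i2; i3; i4; i5] by rewrite /flat /= cats0.
have flat_eq s : size s = 5%N -> alpha = flat s <-> [:: i1; i2; i3; i4; i5] = s.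
  by move=> size_s; rewrite def_alpha; split=> [/flatten_blk_inj-> | ->].
have eqA : A <-> (i1 != i2) && (i3 != i4).
  by rewrite /A (_ : _ ++ _ = flat [:: i1; ~~ i1; i3; ~~ i3; i5]) ?flat_eq ?bitsA //
     /flat /= cats0 -!catA.
have eqB : B <-> (i2 != i3) && (i4 != i5).
  by rewrite /B (_ : _ ++ _ = flat [:: i1; i2; ~~ i2; i4; ~~ i4]) ?flat_eq ?bitsB //
     /flat /= cats0 -!catA.
move: occ_alpha; rewrite def_alpha => /occurs_blk_tmz /(_ isT) [m'].
move=> /(occurs5_pairing (tmz_bit_double _) (tmz_no_triple _)).
move: eqA eqB; case: (_ && _) (_ && _) => [] [] //= [hA hA'] [hB hB'] _.
  by split=> [|[/hA]]; [right; exact: hB'|].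
by split=> [|[_ /hB]]; [left; exact: hA'|].
Qed.
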